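(* Let $\{E^A_{\alpha,k}\}$ be an informationally complete $(N_A,M_A)$ POVM on $\mathbb{C}^{d_A}$ with parameter $x_A$ and $\{E^B_{\beta,j}\}$ an informationally complete $(N_B,M_B)$ POVM on $\mathbb{C}^{d_B}$ with parameter $x_B$. For every separable state $\rho_{AB}$ on $\mathbb{C}^{d_A}\otimes\mathbb{C}^{d_B}$, $$\sum_{\alpha=1}^{N_A}\sum_{k=1}^{M_A}\sum_{\beta=1}^{N_B}\sum_{j=1}^{M_B}\mathrm{tr}\big[(E^A_{\alpha,k}\otimes E^B_{\beta,j})\rho_{AB}\big]^2\le\frac{(d_A-1)(d_A^2+M_A^2x_A)}{d_AM_A(M_A-1)}\cdot\frac{(d_B-1)(d_B^2+M_B^2x_B)}{d_BM_B(M_B-1)}.$$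
   Context: An $(N,M)$ POVM on $\mathbb{C}^d$ (with $M\ge 2$) consists of $N$ POVMs $\{E_{\alpha,k}\mid k=1,\dots,M\}$, $\alpha=1,\dots,N$, satisfying $\mathrm{tr}(E_{\alpha,k})=d/M$, $\mathrm{tr}(E_{\alpha,k}^2)=x$, $\mathrm{tr}(E_{\alpha,k}E_{\alpha,l})=\frac{d-Mx}{M(M-1)}$ for $l\ne k$, and $\mathrm{tr}(E_{\alpha,k}E_{\beta,l})=d/M^2$ for $\beta\ne\alpha$, where $\frac{d}{M^2}<x\le\min\{\frac{d^2}{M^2},\frac dM\}$; it is informationally complete if $N(M-1)=d^2-1$. A state is separable if it is a convex combination of product states $\rho_A^i\otimes\rho_B^i$. *)

From HB Require Import structures.
From mathcomp Require Import all_boot all_order all_algebra.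
From mathcomp Require Export mxtens.
Set Implicit Arguments. Unset Strict Implicit. Unset Printing Implicit Defensive.
Import Order.TTheory GRing.Theory Num.Theory.
Local Open Scope ring_scope.

Section QDefs.
Variable C : numClosedFieldType.

Definition adjmx (m n : nat) (A : 'M[C]_(m, n)) : 'M[C]_(n, m) :=
  map_mx Num.conj (trmx A).

Definition psd (d : nat) (A : 'M[C]_d) : Prop :=
  adjmx A = A /\ forall u : 'cV[C]_d, 0 <= (adjmx u *m A *m u) 0 0.

Definition is_POVM (d M : nat) (E : 'I_M -> 'M[C]_d) : Prop :=
  (forall k, psd (E k)) /\ \sum_(k < M) E k = 1%:M.

Definition NM_POVM (d N M : nat) (x : C) (E : 'I_N -> 'I_M -> 'M[C]_d) : Prop :=
  (2 <= M)%N /\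
  (d%:R / M%:R ^+ 2 < x /\ x <= d%:R ^+ 2 / M%:R ^+ 2 /\ x <= d%:R / M%:R) /\
  (forall a, is_POVM (E a)) /\
  (forall a k, \tr (E a k) = d%:R / M%:R) /\
  (forall a k, \tr (E a k *m E a k) = x) /\
  (forall a k l, k != l ->
      \tr (E a k *m E a l) = (d%:R - M%:R * x) / (M%:R * (M%:R - 1))) /\
  (forall a b k l, a != b -> \tr (E a k *m E b l) = d%:R / M%:R ^+ 2).

Definition IC_NM_POVM (d N M : nat) (x : C) (E : 'I_N -> 'I_M -> 'M[C]_d) : Prop :=
  NM_POVM x E /\ (N * (M - 1) = d ^ 2 - 1)%N.

Definition state (d : nat) (rho : 'M[C]_d) : Prop := psd rho /\ \tr rho = 1.

Definition separable (dA dB : nat) (rho : 'M[C]_(dA * dB)) : Prop :=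
  exists (n : nat) (p : 'I_n -> C) (rA : 'I_n -> 'M[C]_dA) (rB : 'I_n -> 'M[C]_dB),
    [/\ forall i, 0 <= p i, \sum_(i < n) p i = 1,
        forall i, state (rA i), forall i, state (rB i) &
        rho = \sum_(i < n) p i *: (rA i *t rB i)].

Definition povm_bound (d M : nat) (x : C) : C :=
  (d%:R - 1) * (d%:R ^+ 2 + M%:R ^+ 2 * x) / (d%:R * M%:R * (M%:R - 1)).

End QDefs.

From HB Require Import structures.
From mathcomp Require Import all_boot all_order all_algebra.
From mathcomp Require Import mxtens ring.
Import Order.TTheory GRing.Theory Num.Theory.
Local Open Scope ring_scope.
Set Implicit Arguments. Unset Strict Implicit. Unset Printing Implicit Defensive.

(* Fix one informationally complete (N, M) POVM {E_ak} and a state rho, and let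
   v_ak = tr (E_ak rho) - 1/M, which sum to 0 over k. The Gram relations of the
   POVM make Y = sum v_ak E_ak satisfy tr (E_ak Y) = c v_ak, with c the gap
   between the diagonal and off-diagonal Gram values, while
   tr ((rho - 1/d) E_ak) = v_ak. Cauchy-Schwarz for the Hilbert-Schmidt inner
   product then gives sum v_ak^2 <= c (tr rho^2 - 1/d) <= c (1 - 1/d), and
   N (M - 1) = d^2 - 1 turns c (1 - 1/d) + N/M into the single-party bound.
   On a product state the bipartite sum factors into the two single-party sums,
   and convexity of the square carries the bound over to convex combinations
   of product states. *)

Lemma sum_sqr_shift (R : comPzRingType) n (v : 'I_n -> R) (m : R) :
  \sum_i v i = 0 -> \sum_i (v i + m) ^+ 2 = \sum_i v i ^+ 2 + m ^+ 2 *+ n.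
Proof.
move=> v0; have -> : \sum_i (v i + m) ^+ 2 = \sum_i (v i ^+ 2 + m ^+ 2) + m *+ 2 * \sum_i v i.
  by rewrite big_distrr -big_split /=; apply: eq_bigr => i _; ring.
by rewrite v0 mulr0 addr0 big_split /= sumr_const card_ord.
Qed.

Lemma sqr_wmean_le (R : numDomainType) n (p w : 'I_n -> R) :
  (forall i, 0 <= p i) -> \sum_i p i = 1 -> (forall i, w i \is Num.real) ->
  (\sum_i p i * w i) ^+ 2 <= \sum_i p i * w i ^+ 2.
Proof.
move=> p_ge0 p1 w_real; set mu := \sum_i p i * w i.
have mu_real : mu \is Num.real.
  by apply: rpred_sum => i _; rewrite rpredM // ger0_real.
have var_ge0 : 0 <= \sum_i p i * (w i - mu) ^+ 2.
  by apply: sumr_ge0 => i _; rewrite mulr_ge0 // -realEsqr rpredB.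
have var_eq : \sum_i p i * (w i - mu) ^+ 2 = \sum_i p i * w i ^+ 2 - mu ^+ 2.
  transitivity (\sum_i p i * w i ^+ 2 - mu *+ 2 * \sum_i p i * w i + mu ^+ 2 * \sum_i p i).
    rewrite !big_distrr -sumrB -big_split /=; apply: eq_bigr => i _; ring.
  by rewrite -/mu p1; ring.
by rewrite -subr_ge0 -var_eq.
Qed.

Lemma mxtrace_tens (R : comPzRingType) m n (A : 'M[R]_m) (B : 'M[R]_n) :
  \tr (A *t B) = \tr A * \tr B.
Proof.
rewrite /mxtrace mulr_sum; apply: eq_bigr => k _.
by rewrite -[in LHS](mxtens_unindexK k); case: (mxtens_unindex k) => i j; rewrite tensmxE.
Qed.

Lemma mxE_delta_mul_delta (R : pzSemiRingType) n (A : 'M[R]_n) i j :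
  (delta_mx 0 i *m A *m delta_mx j 0 : 'M[R]_1) 0 0 = A i j.
Proof. by rewrite -rowE -colE !mxE. Qed.

Section Hermitian.
Variable C : numClosedFieldType.
Implicit Types (m n p q : nat).

Lemma adjmxE m n (A : 'M[C]_(m, n)) i j : adjmx A i j = (A j i)^*.
Proof. by rewrite !mxE. Qed.

Lemma adjmxD m n (A B : 'M[C]_(m, n)) : adjmx (A + B) = adjmx A + adjmx B.
Proof. by apply/matrixP => i j; rewrite !mxE rmorphD. Qed.

Lemma adjmxB m n (A B : 'M[C]_(m, n)) : adjmx (A - B) = adjmx A - adjmx B.
Proof. by apply/matrixP => i j; rewrite !mxE rmorphB. Qed.

Lemma adjmxZ m n (s : C) (A : 'M[C]_(m, n)) : adjmx (s *: A) = s^* *: adjmx A.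
Proof. by apply/matrixP => i j; rewrite !mxE rmorphM. Qed.

Lemma adjmx_sum m n I (r : seq I) (P : pred I) (F : I -> 'M[C]_(m, n)) :
  adjmx (\sum_(i <- r | P i) F i) = \sum_(i <- r | P i) adjmx (F i).
Proof.
apply/matrixP => i j; rewrite !mxE !summxE rmorph_sum.
by apply: eq_bigr => k _; rewrite !mxE.
Qed.

Lemma adjmx_scalar n (s : C) : adjmx (s%:M : 'M_n) = s^*%:M.
Proof. by apply/matrixP => i j; rewrite !mxE rmorphMn eq_sym. Qed.

Lemma adjmx_delta n (i : 'I_n) : adjmx (delta_mx i 0 : 'cV[C]_n) = delta_mx 0 i.
Proof. by apply/matrixP => k l; rewrite !mxE (rmorph_nat _ (_ && _)) andbC. Qed.

Lemma adjmxM m n p (A : 'M[C]_(m, n)) (B : 'M[C]_(n, p)) :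
  adjmx (A *m B) = adjmx B *m adjmx A.
Proof.
apply/matrixP => i j; rewrite !mxE rmorph_sum; apply: eq_bigr => k _.
by rewrite !mxE rmorphM mulrC.
Qed.

Lemma mxtrace_adj n (A : 'M[C]_n) : \tr (adjmx A) = (\tr A)^*.
Proof. by rewrite /mxtrace rmorph_sum; apply: eq_bigr => i _; rewrite !mxE. Qed.

Lemma herm_mxtrace_mul_real n (A B : 'M[C]_n) :
  adjmx A = A -> adjmx B = B -> \tr (A *m B) \is Num.real.
Proof. by move=> hA hB; apply/CrealP; rewrite -mxtrace_adj adjmxM hA hB mxtrace_mulC. Qed.

Lemma herm_mxtrace_sqr_ge0 n (A : 'M[C]_n) : adjmx A = A -> 0 <= \tr (A *m A).
Proof.
move=> hA; apply: sumr_ge0 => i _; rewrite mxE; apply: sumr_ge0 => j _.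
by rewrite -{2}hA adjmxE mul_conjC_ge0.
Qed.

Lemma psd_form2 n (A : 'M[C]_n) i j (a b : C) : psd A ->
  0 <= a^* * a * A i i + a^* * b * A i j + b^* * a * A j i + b^* * b * A j j.
Proof.
case=> _ /(_ (a *: delta_mx i 0 + b *: delta_mx j 0)).
rewrite adjmxD !adjmxZ !adjmx_delta !(mulmxDl, mulmxDr) -!(scalemxAl, scalemxAr).
by rewrite !(mxE_delta_mul_delta, mxE) !mulrA !addrA (addrAC _ (b^* * a * A j i)).
Qed.

Lemma psd_diag_ge0 n (A : 'M[C]_n) i : psd A -> 0 <= A i i.
Proof.
by move=> /(psd_form2 i i 1 0); rewrite rmorph1 rmorph0 !(mul0r, mulr0, mul1r, addr0).
Qed.

Lemma psd_minor2 n (A : 'M[C]_n) i j : psd A -> A i j * A j i <= A i i * A j j.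
Proof.
move=> hA; have conjA k l : (A k l)^* = A l k by rewrite -adjmxE hA.1.
(* the form at [A_ll e_k - A_lk e_l] equals [A_ll (A_kk A_ll - A_kl A_lk)] *)
have weighted k l : 0 <= A l l * (A k k * A l l - A k l * A l k).
  by have := psd_form2 k l (A l l) (- A l k) hA; rewrite conjA; congr (_ <= _); ring.
have [hii | ] := boolP (0 < A i i).
  by have := weighted j i; rewrite pmulr_rge0 // subr_ge0 mulrC; congr (_ <= _); ring.
have [hjj | ] := boolP (0 < A j j).
  by have := weighted i j; rewrite pmulr_rge0 // subr_ge0.
rewrite !lt0r (psd_diag_ge0 i hA) (psd_diag_ge0 j hA) !andbT !negbK.
move=> /eqP hj0 /eqP hi0; rewrite hi0 mul0r.
(* with a zero diagonal, the form at [e_i - A_ji e_j] is [- 2 A_ij A_ji] *)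
have := psd_form2 i j 1 (- A j i) hA.
have conjN (x : C) : (- x)^* = - x^* by exact: rmorphN.
rewrite hi0 hj0 rmorph1 conjN conjA (_ : _ + _ = - (A i j * A j i *+ 2)); last by ring.
by rewrite oppr_ge0 pmulrn_lle0.
Qed.

Lemma psd_mxtrace_sqr_le n (A : 'M[C]_n) : psd A -> \tr (A *m A) <= (\tr A) ^+ 2.
Proof.
move=> hA; rewrite expr2 /mxtrace big_distrl /=; apply: ler_sum => i _.
rewrite mxE big_distrr /=; apply: ler_sum => j _; exact: psd_minor2.
Qed.

Lemma adjmx_tens m n p q (A : 'M[C]_(m, n)) (B : 'M[C]_(p, q)) :
  adjmx (A *t B) = adjmx A *t adjmx B.
Proof. by rewrite /adjmx trmx_tens map_mxT. Qed.

Lemma cauchy_schwarz_mxtrace n (X Y : 'M[C]_n) (c : C) :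
  adjmx X = X -> adjmx Y = Y -> 0 < c -> \tr (Y *m Y) = c * \tr (X *m Y) ->
  \tr (X *m Y) <= c * \tr (X *m X).
Proof.
move=> hX hY c_gt0 trYY; set s := \tr (X *m Y).
have c_conj : (c^-1)^* = c^-1 by apply/CrealP; rewrite rpredV gtr0_real.
have hZ : adjmx (X - c^-1 *: Y) = X - c^-1 *: Y.
  by rewrite adjmxB adjmxZ hX hY c_conj.
have := herm_mxtrace_sqr_ge0 hZ.
rewrite mulmxBl !mulmxBr -!scalemxAl -!scalemxAr !linearB /= !mxtraceZ.
rewrite [\tr (Y *m X)]mxtrace_mulC trYY -/s mulKf ?gt_eqF // subrr subr0.
by rewrite subr_ge0 ler_pdivrMl.
Qed.

Lemma herm_sum_sqr_mxtrace_ge0 n N M (E : 'I_N -> 'I_M -> 'M[C]_n) (r : 'M[C]_n) :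
  (forall a k, adjmx (E a k) = E a k) -> adjmx r = r ->
  0 <= \sum_a \sum_k (\tr (E a k *m r)) ^+ 2.
Proof.
move=> hE hr; apply: sumr_ge0 => a _; apply: sumr_ge0 => k _.
by rewrite -realEsqr herm_mxtrace_mul_real.
Qed.

Lemma sqr_mxtrace_mix_le n m (A : 'M[C]_n) (p : 'I_m -> C) (r : 'I_m -> 'M[C]_n) :
  adjmx A = A -> (forall i, adjmx (r i) = r i) ->
  (forall i, 0 <= p i) -> \sum_i p i = 1 ->
  (\tr (A *m \sum_i p i *: r i)) ^+ 2 <= \sum_i p i * (\tr (A *m r i)) ^+ 2.
Proof.
move=> hA hr p_ge0 p1; rewrite mulmx_sumr linear_sum.
under eq_bigr => i _ do rewrite -scalemxAr linearZ.
by apply: sqr_wmean_le => // i; apply: herm_mxtrace_mul_real.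
Qed.
End Hermitian.

(* Equal to [x - (d - M x) / (M (M - 1))]: the diagonal minus the off-diagonal
   Gram value [tr (E_ak E_al)] within one POVM of the family. *)
Definition povm_gap (C : numClosedFieldType) (d M : nat) (x : C) : C :=
  (M%:R ^+ 2 * x - d%:R) / (M%:R * (M%:R - 1)).

Section NMPOVM.
Variables (C : numClosedFieldType) (d N M : nat) (x : C).
Variable E : 'I_N -> 'I_M -> 'M[C]_d.
Hypothesis hE : NM_POVM x E.

Lemma NM_POVM_gt1 : (1 < M)%N.
Proof. by case: hE. Qed.

Lemma NM_POVM_dim_gt0 : (0 < d)%N.
Proof.
case: hE => _ [[lb [ub _]] _]; rewrite lt0n; apply/eqP => d0.
by move: (lt_le_trans lb ub); rewrite d0 mul0r expr0n /= mul0r ltxx.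
Qed.

Lemma NM_POVM_outcomes_neq0 : M%:R != 0 :> C.
Proof. by rewrite pnatr_eq0 -lt0n ltnW ?NM_POVM_gt1. Qed.

Lemma NM_POVM_dim_neq0 : d%:R != 0 :> C.
Proof. by rewrite pnatr_eq0 -lt0n NM_POVM_dim_gt0. Qed.

Lemma NM_POVM_herm a k : adjmx (E a k) = E a k.
Proof. by case: hE => _ [_ [/(_ a) [/(_ k) [] ]]]. Qed.

Lemma povm_gap_gt0 : 0 < povm_gap d M x.
Proof.
case: hE => M_gt1 [[lb _] _].
have M_gt0 : 0 < M%:R :> C by rewrite ltr0n ltnW.
have M1_gt0 : 0 < M%:R - 1 :> C by rewrite subr_gt0 ltr1n.
by rewrite divr_gt0 ?mulr_gt0 // subr_gt0 mulrC -ltr_pdivrMr ?exprn_gt0.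
Qed.

Lemma sum_mxtrace_NM_POVM_mul a (rho : 'M[C]_d) :
  \tr rho = 1 -> \sum_k \tr (E a k *m rho) = 1.
Proof.
case: hE => _ [_ [/(_ a) [_ sumE] _]] tr1.
by rewrite -linear_sum -mulmx_suml sumE mul1mx.
Qed.

Lemma sum_NM_POVM_dev a (rho : 'M[C]_d) :
  \tr rho = 1 -> \sum_k (\tr (E a k *m rho) - M%:R^-1) = 0.
Proof.
move=> tr1; rewrite sumrB sum_mxtrace_NM_POVM_mul // sumr_const card_ord.
by rewrite -[_ *+ M]mulr_natr mulVf ?subrr ?NM_POVM_outcomes_neq0.
Qed.

Lemma mxtrace_NM_POVM_comb (v : 'I_N -> 'I_M -> C) a k :
  (forall b, \sum_l v b l = 0) ->
  \tr (E a k *m \sum_b \sum_l v b l *: E b l) = povm_gap d M x * v a k.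
Proof.
case: hE => M_gt1 [_ [_ [_ [trEE [trEkl trEab]]]]] v0.
have trE b l : \tr (E a k *m (v b l *: E b l)) = v b l * \tr (E a k *m E b l).
  by rewrite -scalemxAr linearZ.
rewrite mulmx_sumr linear_sum (bigD1 a) //= [X in _ + X]big1 => [|b ba]; last first.
  rewrite mulmx_sumr linear_sum /=.
  under eq_bigr => l _ do rewrite trE trEab 1?eq_sym //.
  by rewrite -big_distrl /= v0 mul0r.
rewrite addr0 mulmx_sumr linear_sum /= (bigD1 k) //= trE trEE.
under eq_bigr => l lk do rewrite trE trEkl 1?eq_sym //.
have := v0 a; rewrite (bigD1 k) //= addrC => /eqP; rewrite addr_eq0 -big_distrl /= => /eqP ->.
have M1_neq0 : M%:R - 1 != 0 :> C by rewrite subr_eq0 pnatr_eq1 gtn_eqF.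
by rewrite /povm_gap; field; rewrite NM_POVM_outcomes_neq0 M1_neq0.
Qed.

Lemma NM_POVM_dev_sum_sqr_le (rho : 'M[C]_d) : state rho ->
  \sum_a \sum_k (\tr (E a k *m rho) - M%:R^-1) ^+ 2 <= povm_gap d M x * (1 - d%:R^-1).
Proof.
move=> [rho_psd tr1]; have [_ [_ [_ [trE _]]]] := hE.
pose v a k := \tr (E a k *m rho) - M%:R^-1.
pose X := rho - d%:R^-1%:M; pose Y := \sum_a \sum_k v a k *: E a k.
have hX : adjmx X = X by rewrite adjmxB adjmx_scalar rho_psd.1 fmorphV rmorph_nat.
have v_real a k : v a k \is Num.real.
  by rewrite rpredB ?rpredV ?realn // herm_mxtrace_mul_real ?NM_POVM_herm // rho_psd.1.
have hY : adjmx Y = Y.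
  rewrite adjmx_sum; apply: eq_bigr => a _; rewrite adjmx_sum; apply: eq_bigr => k _.
  by rewrite adjmxZ NM_POVM_herm // conj_Creal.
have trXE a k : \tr (X *m E a k) = v a k.
  rewrite mulmxBl mul_scalar_mx linearB /= mxtraceZ trE mxtrace_mulC /v.
  by rewrite mulKf ?NM_POVM_dim_neq0.
have trXY : \tr (X *m Y) = \sum_a \sum_k v a k ^+ 2.
  rewrite mulmx_sumr linear_sum /=; apply: eq_bigr => a _.
  rewrite mulmx_sumr linear_sum /=; apply: eq_bigr => k _.
  by rewrite -scalemxAr linearZ /= trXE expr2.
have trEY a k : \tr (E a k *m Y) = povm_gap d M x * v a k.
  by apply: mxtrace_NM_POVM_comb => b; apply: sum_NM_POVM_dev.
have trYY : \tr (Y *m Y) = povm_gap d M x * \tr (X *m Y).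
  rewrite trXY mulmx_suml linear_sum big_distrr /=; apply: eq_bigr => a _.
  rewrite mulmx_suml linear_sum big_distrr /=; apply: eq_bigr => k _.
  by rewrite -scalemxAl linearZ /= trEY mulrCA expr2.
have trXX : \tr (X *m X) = \tr (rho *m rho) - d%:R^-1.
  rewrite mulmxBl !mulmxBr mul_mx_scalar !mul_scalar_mx !linearB /= !mxtraceZ.
  by rewrite mxtrace_scalar tr1 -mulr_natr; field; rewrite NM_POVM_dim_neq0.
rewrite -trXY; apply: le_trans (cauchy_schwarz_mxtrace hX hY povm_gap_gt0 trYY) _.
apply: ler_wpM2l; first exact/ltW/povm_gap_gt0.
rewrite trXX lerD2r -(expr1n _ 2) -tr1.
exact: psd_mxtrace_sqr_le.
Qed.

Lemma NM_POVM_sum_sqr_le (rho : 'M[C]_d) : state rho ->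
  \sum_a \sum_k (\tr (E a k *m rho)) ^+ 2
    <= povm_gap d M x * (1 - d%:R^-1) + N%:R / M%:R.
Proof.
move=> rho_state.
have sum_sqr_row a : \sum_k (\tr (E a k *m rho)) ^+ 2 =
    \sum_k (\tr (E a k *m rho) - M%:R^-1) ^+ 2 + M%:R^-1 ^+ 2 *+ M.
  rewrite -sum_sqr_shift ?sum_NM_POVM_dev ?rho_state.2 //.
  by apply: eq_bigr => k _; rewrite subrK.
rewrite (eq_bigr _ (fun a _ => sum_sqr_row a)) big_split /= sumr_const card_ord.
apply: lerD; first exact: NM_POVM_dev_sum_sqr_le.
suff -> : M%:R^-1 ^+ 2 *+ M *+ N = N%:R / M%:R :> C by [].
by field; rewrite NM_POVM_outcomes_neq0.
Qed.
End NMPOVM.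

Lemma povm_bound_IC (C : numClosedFieldType) (d N M : nat) (x : C) :
  (1 < M)%N -> (0 < d)%N -> (N * (M - 1) = d ^ 2 - 1)%N ->
  povm_bound d M x = povm_gap d M x * (1 - d%:R^-1) + N%:R / M%:R.
Proof.
move=> M_gt1 d_gt0 IC.
have M1_neq0 : M%:R - 1 != 0 :> C by rewrite subr_eq0 pnatr_eq1 gtn_eqF.
have NE : N%:R = (d%:R ^+ 2 - 1) / (M%:R - 1) :> C.
  rewrite -[LHS](mulfK M1_neq0); congr (_ / _).
  have M1E : M%:R - 1 = (M - 1)%:R :> C by rewrite natrB // ltnW.
  have d21E : d%:R ^+ 2 - 1 = (d ^ 2 - 1)%:R :> C by rewrite natrB ?natrX // expn_gt0 d_gt0.
  by rewrite M1E d21E -natrM IC.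
rewrite /povm_bound /povm_gap NE; field.
by rewrite M1_neq0 !pnatr_eq0 -!lt0n d_gt0 ltnW.
Qed.

Lemma IC_NM_POVM_sum_sqr_le (C : numClosedFieldType) (d N M : nat) (x : C)
    (E : 'I_N -> 'I_M -> 'M[C]_d) (rho : 'M[C]_d) :
  IC_NM_POVM x E -> state rho ->
  \sum_a \sum_k (\tr (E a k *m rho)) ^+ 2 <= povm_bound d M x.
Proof.
move=> [hE IC] rho_state.
rewrite (povm_bound_IC _ (NM_POVM_gt1 hE) (NM_POVM_dim_gt0 hE) IC).
exact: NM_POVM_sum_sqr_le.
Qed.

Lemma sum_sqr_mxtrace_tens (R : comPzRingType) (m n N1 M1 N2 M2 : nat)
    (F : 'I_N1 -> 'I_M1 -> 'M[R]_m) (G : 'I_N2 -> 'I_M2 -> 'M[R]_n)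
    (rA : 'M[R]_m) (rB : 'M[R]_n) :
  \sum_a \sum_k \sum_b \sum_j (\tr ((F a k *t G b j) *m (rA *t rB))) ^+ 2 =
  (\sum_a \sum_k (\tr (F a k *m rA)) ^+ 2) * (\sum_b \sum_j (\tr (G b j *m rB)) ^+ 2).
Proof.
rewrite mulr_suml; apply: eq_bigr => a _; rewrite mulr_suml; apply: eq_bigr => k _.
rewrite mulr_sumr; apply: eq_bigr => b _; rewrite mulr_sumr; apply: eq_bigr => j _.
by rewrite tensmx_mul mxtrace_tens exprMn.
Qed.

Lemma wsum_exchange4 (R : pzSemiRingType) (n N1 M1 N2 M2 : nat) (p : 'I_n -> R)
    (F : 'I_n -> 'I_N1 -> 'I_M1 -> 'I_N2 -> 'I_M2 -> R) :
  \sum_i p i * \sum_a \sum_k \sum_b \sum_j F i a k b j =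
  \sum_a \sum_k \sum_b \sum_j \sum_i p i * F i a k b j.
Proof.
under eq_bigr => i _ do rewrite big_distrr; rewrite exchange_big; apply: eq_bigr => a _.
under eq_bigr => i _ do rewrite big_distrr; rewrite exchange_big; apply: eq_bigr => k _.
under eq_bigr => i _ do rewrite big_distrr; rewrite exchange_big; apply: eq_bigr => b _.
by under eq_bigr => i _ do rewrite big_distrr; rewrite exchange_big.
Qed.

Theorem mainTheorem4 (C : numClosedFieldType)
  (dA NA MA : nat) (xA : C) (EA : 'I_NA -> 'I_MA -> 'M[C]_dA)
  (dB NB MB : nat) (xB : C) (EB : 'I_NB -> 'I_MB -> 'M[C]_dB)
  (rho : 'M[C]_(dA * dB)) :
  IC_NM_POVM xA EA -> IC_NM_POVM xB EB -> separable rho ->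
  \sum_(a < NA) \sum_(k < MA) \sum_(b < NB) \sum_(j < MB)
     (\tr ((EA a k *t EB b j) *m rho)) ^+ 2
  <= povm_bound dA MA xA * povm_bound dB MB xB.
Proof.
move=> hA hB [n [p [rA [rB [p_ge0 p1 rA_state rB_state ->]]]]].
apply: (@le_trans _ _ (\sum_i p i * ((\sum_a \sum_k (\tr (EA a k *m rA i)) ^+ 2) *
                                     (\sum_b \sum_j (\tr (EB b j *m rB i)) ^+ 2)))).
  rewrite (eq_bigr _ (fun i _ => congr1 _ (esym (sum_sqr_mxtrace_tens EA EB _ _)))).
  rewrite wsum_exchange4; do 4! (apply: ler_sum => ? _).
  apply: sqr_mxtrace_mix_le => // [|i].
    by rewrite adjmx_tens (NM_POVM_herm hA.1) (NM_POVM_herm hB.1).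
  by rewrite adjmx_tens (rA_state i).1.1 (rB_state i).1.1.
rewrite -[X in _ <= X]mul1r -p1 big_distrl /=; apply: ler_sum => i _.
apply: ler_wpM2l => //; apply: ler_pM; try exact: IC_NM_POVM_sum_sqr_le.
- exact: herm_sum_sqr_mxtrace_ge0 (NM_POVM_herm hA.1) (rA_state i).1.1.
- exact: herm_sum_sqr_mxtrace_ge0 (NM_POVM_herm hB.1) (rB_state i).1.1.
Qed.
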